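(* For every real $p>1$ and all integers $s\ge2$ and $n\ge s$, $$\sum_{\mathbf a\in\mathcal{F}_s(n)}\Big(\frac{n}{\prod_{j=1}^sa_j}\Big)^p<C_p^{s-1},$$ where $\mathcal{F}_s(n)=\{\mathbf a\in\{1,\dots,n\}^s:\sum_{j=1}^sa_j=n\}$ and $C_p=2^p\zeta(p)$ with $\zeta(p)=\sum_{a=1}^\infty a^{-p}$. *)

From HB Require Import structures.
From mathcomp Require Import all_boot all_order all_algebra.
From mathcomp Require Import all_classical all_reals all_analysis.
Set Implicit Arguments. Unset Strict Implicit. Unset Printing Implicit Defensive.
Import Order.TTheory GRing.Theory Num.Theory.
Import numFieldNormedType.Exports.
Local Open Scope ring_scope.

Definition zeta (R : realType) (p : R) : R :=
  limn (series (fun a : nat => (a.+1%:R : R) `^ (- p))).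

Definition Cp (R : realType) (p : R) : R := (2 : R) `^ p * zeta p.

(* Sum over compositions F_s(n) = {a in {1..n}^s : sum a_j = n} of
   (n / prod a_j)^p.  An element a : {ffun 'I_s -> 'I_n} encodes
   a_j = (a j).+1 in {1,...,n}. *)
Definition compSum (R : realType) (p : R) (s n : nat) : R :=
  \sum_(a : {ffun 'I_s -> 'I_n} | (\sum_(j < s) (a j).+1 == n)%N)
     ((n%:R : R) / (\prod_(j < s) ((a j).+1%:R : R))) `^ p.

From HB Require Import structures.
From mathcomp Require Import all_boot all_order all_algebra.
From mathcomp Require Import all_classical all_reals all_analysis.
From mathcomp Require Import ring zify.
Import Order.TTheory GRing.Theory Num.Theory.
Import numFieldNormedType.Exports.
Set Implicit Arguments. Unset Strict Implicit. Unset Printing Implicit Defensive.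
Local Open Scope ring_scope.

(* Let c_s(m) be the sum of \prod_i a_i^-p over the compositions (a_1, ..., a_s)
   of m with parts at most n: it is the coefficient of X^m in P^s, where
   P = \sum_(1 <= a <= n) a^-p X^a, and compSum p s n = n^p c_s(n).  Splitting off
   one part j and using m / (j (m - j)) = 1/j + 1/(m - j) shows that if k^p c_s(k) <= K
   for all k <= n, then m^p c_(s+1)(m) <= K * \sum_(0 < j < m) (1/j + 1/(m - j))^p.
   By convexity of x^p that last sum is at most 2^p \sum_(0 < j < m) j^-p < C_p, and
   m^p c_1(m) <= 1, so induction on s gives the strict bound C_p^(s-1). *)

Section PartsPoly.
Variables (R : comNzRingType) (n : nat) (w : nat -> R).

Definition parts_poly : {poly R} := \sum_(j < n) w j.+1 *: 'X^(j.+1).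

Lemma coef_parts_poly0 : parts_poly`_0 = 0.
Proof. by rewrite coef_sum big1 // => j _; rewrite coefZ coefXn mulr0. Qed.

Lemma coef_parts_poly i : (0 < i <= n)%N -> parts_poly`_i = w i.
Proof.
case: i => // i /= lt_in; rewrite coef_sum (bigD1 (Ordinal lt_in)) //= big1.
  by rewrite coefZ coefXn eqxx mulr1 addr0.
move=> j ne_ji; rewrite coefZ coefXn eqSS.
by case: eqP => [eq_ij | _]; [case/eqP: ne_ji; apply: val_inj | rewrite mulr0].
Qed.

Lemma coef_parts_poly_exp s m : (parts_poly ^+ s)`_m =
  \sum_(a : {ffun 'I_s -> 'I_n} | (\sum_(j < s) (a j).+1 == m)%N)
     \prod_(j < s) w (a j).+1.
Proof.
have -> : parts_poly ^+ s = \prod_(j < s) parts_poly.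
  by rewrite -(big_mkord xpredT (fun=> parts_poly)) prodr_const_nat subn0.
rewrite /parts_poly bigA_distr_bigA coef_sum [RHS]big_mkcond; apply: eq_bigr => a _.
under eq_bigr do rewrite -mul_polyC.
rewrite big_split /= prodrXr -rmorph_prod mul_polyC coefZ coefXn eq_sym.
by case: eqP; rewrite ?mulr1 ?mulr0.
Qed.

End PartsPoly.

Lemma ler_powRN (R : realType) (q a b : R) :
  0 <= q -> 0 < a -> a <= b -> b `^ (- q) <= a `^ (- q).
Proof.
move=> q_ge0 a_gt0 le_ab; have b_gt0 := lt_le_trans a_gt0 le_ab.
rewrite !powRN lef_pV2 ?posrE ?powR_gt0 //.
by apply: ge0_ler_powR => //; rewrite nnegrE ltW.
Qed.

Lemma powRV (R : realType) (k q : R) : 0 <= k -> k^-1 `^ q = k `^ (- q).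
Proof. by move=> k_ge0; rewrite -powR_inv1 // powRAC powR_inv1 ?powR_ge0 // powRN. Qed.

Lemma powR_prod (R : realType) (I : Type) (r : seq I) (F : I -> R) (q : R) :
  (forall i, 0 <= F i) -> (\prod_(i <- r) F i) `^ q = \prod_(i <- r) F i `^ q.
Proof.
move=> F_ge0; elim: r => [|i r IH]; first by rewrite !big_nil powR1.
by rewrite !big_cons powRM ?IH ?prodr_ge0.
Qed.

Lemma powRD_le (R : realType) (p x y : R) : 1 <= p -> 0 <= x -> 0 <= y ->
  (x + y) `^ p <= 2 `^ (p - 1) * (x `^ p + y `^ p).
Proof.
move=> p_ge1 x_ge0 y_ge0.
have half_convex (a b : R) : 0 <= a -> 0 <= b ->
    (2^-1 * a + (1 - 2^-1) * b) `^ p <= 2^-1 * a `^ p + (1 - 2^-1) * b `^ p.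
  move=> a_ge0 b_ge0; apply: (convex_powR p_ge1 (Itv01 _ _)) => //=;
  by rewrite ?inE/= ?in_itv/= ?andbT // ?invr_ge0// invf_le1 ?ler1n.
have half_eq : 1 - 2^-1 = 2^-1 :> R by rewrite {1}(splitr 1) div1r addrK.
have := half_convex (2 * x) (2 * y); rewrite half_eq !mulr_ge0 //.
rewrite !mulrA mulVf ?pnatr_eq0 // !mul1r => /(_ isT isT) /le_trans; apply.
rewrite !powRM // !mulrA -mulrDr ler_wpM2r ?addr_ge0 ?powR_ge0 //.
by rewrite powRD ?pnatr_eq0 ?implybT // powR_inv1 // mulrC.
Qed.

Definition zeta_term (R : realType) (p : R) (k : nat) : R := k.+1%:R `^ (- p).

Section Zeta.
Variables (R : realType) (p : R).
Hypothesis p_gt1 : 1 < p.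

Let r : R := 2 `^ (1 - p).

Let r_gt0 : 0 < r. Proof. exact: powR_gt0. Qed.

Let r_lt1 : r < 1.
Proof.
rewrite /r -opprB powRN invf_lt1 ?powR_gt0 //.
have := @gt0_ltr_powR R (p - 1) _ 1 2.
by rewrite powR1; apply; rewrite ?nnegrE ?subr_gt0 ?ltr1n.
Qed.

Lemma zeta_term_gt0 k : 0 < zeta_term p k.
Proof. by rewrite powR_gt0 ?ltr0n. Qed.

(* Cauchy condensation: the J-th dyadic block has 2^J terms, each at most (2^J)^-p. *)
Lemma sum_zeta_term_dyadic J :
  \sum_(2 ^ J - 1 <= k < 2 ^ J.+1 - 1) zeta_term p k <= r ^+ J.
Proof.
have exp2_gt0 : (0 < 2 ^ J)%N by rewrite expn_gt0.
apply: (@le_trans _ _ (\sum_(2 ^ J - 1 <= k < 2 ^ J.+1 - 1) (2 ^ J)%:R `^ (- p))).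
  apply: ler_sum_nat => k /andP[lo_k k_hi].
  by apply: ler_powRN; rewrite ?(le_trans ler01 (ltW p_gt1)) ?ltr0n ?ler_nat //; lia.
rewrite sumr_const_nat.
have -> : (2 ^ J.+1 - 1 - (2 ^ J - 1) = 2 ^ J)%N by rewrite expnS; lia.
rewrite -[_ *+ 2 ^ J]mulr_natl -[X in X * _]powRr1 ?ler0n // -powRD; last first.
  by rewrite pnatr_eq0 expn_eq0 implybT.
by rewrite natrX -powR_mulrn // -powRrM mulrC powRrM powR_mulrn ?powR_ge0.
Qed.

Lemma series_zeta_term_exp2 J :
  series (zeta_term p) (2 ^ J - 1)%N <= series (geometric 1 r) J.
Proof.
elim: J => [|J IH]; first by rewrite expn0 subnn !seriesEnat /= !big_geq.
rewrite !seriesEnat /= (@big_cat_nat _ _ _ (2 ^ J - 1)) //=; last by rewrite expnS; lia.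
rewrite big_nat_recr //= mul1r; apply: lerD; last exact: sum_zeta_term_dyadic.
by move: IH; rewrite !seriesEnat.
Qed.

Lemma nondecreasing_series_zeta_term : nondecreasing_seq (series (zeta_term p)).
Proof.
by rewrite seriesEnat; apply: nondecreasing_series => k _ _; exact/ltW/zeta_term_gt0.
Qed.

Lemma series_zeta_term_le N : series (zeta_term p) N <= (1 - r)^-1.
Proof.
apply: (@le_trans _ _ (series (zeta_term p) (2 ^ N - 1)%N)).
  by apply: nondecreasing_series_zeta_term; have := @ltn_expl 2 N isT; lia.
apply: (le_trans (series_zeta_term_exp2 N)).
by rewrite -[leRHS]mul1r geometric_le_lim // gtr0_norm.
Qed.

Lemma series_lt_zeta N : series (zeta_term p) N < zeta p.
Proof.
have cvg_zeta : cvgn (series (zeta_term p)).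
  apply: nondecreasing_is_cvgn; first exact: nondecreasing_series_zeta_term.
  by exists (1 - r)^-1 => _ [k _ <-]; exact: series_zeta_term_le.
apply: lt_le_trans (nondecreasing_cvgn_le nondecreasing_series_zeta_term cvg_zeta N.+1).
by apply/increasing_seqP: N; apply: increasing_series; exact: zeta_term_gt0.
Qed.

Lemma zeta_gt0 : 0 < zeta p.
Proof. by apply: le_lt_trans (series_lt_zeta 0); rewrite seriesEnat /= big_geq. Qed.

End Zeta.

Section SplitSum.
Variables (R : realType) (p : R).
Hypothesis p_gt1 : 1 < p.

Definition split_sum (m : nat) : R :=
  \sum_(1 <= j < m) (j%:R^-1 + (m - j)%:R^-1) `^ p.

Lemma split_sum_le m : split_sum m <= 2 `^ p * series (zeta_term p) m.-1.
Proof.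
have p_gt0 : 0 < p := lt_trans ltr01 p_gt1.
apply: (@le_trans _ _ (\sum_(1 <= j < m)
    2 `^ (p - 1) * (j%:R `^ (- p) + (m - j)%:R `^ (- p)))).
  apply: ler_sum_nat => j /andP[j_gt0 lt_jm].
  by rewrite -!powRV ?ler0n // powRD_le ?invr_ge0 ?ler0n ?ltW.
have reflect_sum : \sum_(1 <= j < m) (m - j)%:R `^ (- p) = \sum_(1 <= j < m) j%:R `^ (- p) :> R.
  rewrite big_nat_rev big_nat [RHS]big_nat; apply: eq_bigr => j /andP[j_gt0 lt_jm].
  by congr (_%:R `^ _); lia.
have shift_sum : \sum_(1 <= j < m) j%:R `^ (- p) = series (zeta_term p) m.-1.
  by rewrite seriesEnat /= -(add0n 1%N) big_addn subn1; apply: eq_bigr => j _; rewrite addn1.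
rewrite -mulr_sumr big_split /= reflect_sum shift_sum -mulr2n mulrnAr.
by rewrite -mulr_natl mulrA -[in leRHS](mulr_powRB1 (ler0n R 2) p_gt0) mulrC.
Qed.

Lemma Cp_gt0 : 0 < Cp p.
Proof. by rewrite mulr_gt0 ?powR_gt0 ?zeta_gt0. Qed.

Lemma split_sum_lt_Cp m : split_sum m < Cp p.
Proof.
apply: le_lt_trans (split_sum_le m) _.
by rewrite ltr_pM2l ?powR_gt0 ?series_lt_zeta.
Qed.

End SplitSum.

Section CompositionBound.
Variables (R : realType) (p : R) (n : nat).
Hypothesis p_gt1 : 1 < p.

Let P : {poly R} := parts_poly n (fun j => j%:R `^ (- p)).

Lemma compSumE s : compSum p s n = n%:R `^ p * (P ^+ s)`_n.
Proof.
rewrite coef_parts_poly_exp /compSum mulr_sumr; apply: eq_bigr => a _.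
have prod_gt0 : 0 < \prod_(j < s) ((a j).+1%:R : R) by apply: prodr_gt0.
by rewrite powRM ?invr_ge0 ?ler0n ?ltW // powRV ?ltW // powR_prod.
Qed.

Lemma powR_split (j m : nat) : (0 < j < m)%N ->
  m%:R `^ p * j%:R `^ (- p) = (j%:R^-1 + (m - j)%:R^-1) `^ p * (m - j)%:R `^ p :> R.
Proof.
move=> /andP[j_gt0 lt_jm].
have j_neq0 : j%:R != 0 :> R by rewrite pnatr_eq0 -lt0n.
have mj_neq0 : (m - j)%:R != 0 :> R by rewrite pnatr_eq0 subn_eq0 -ltnNge.
have -> : m%:R = (j%:R^-1 + (m - j)%:R^-1) * (m - j)%:R * j%:R :> R.
  by rewrite -{1}(subnK (ltnW lt_jm)) natrD; field; apply/andP.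
rewrite !powRM ?mulr_ge0 ?addr_ge0 ?invr_ge0 ?ler0n // -mulrA -powRD.
  by rewrite subrr powRr0 mulr1.
by rewrite subrr eqxx.
Qed.

Lemma coef_exp_step s K : (0 < s)%N ->
  (forall m, (m <= n)%N -> m%:R `^ p * (P ^+ s)`_m <= K) ->
  forall m, (m <= n)%N -> m%:R `^ p * (P ^+ s.+1)`_m <= K * split_sum p m.
Proof.
move=> s_gt0 bound_s m le_mn.
have coef0_exp : (P ^+ s)`_0 = 0.
  by case: s s_gt0 bound_s => // s _ _; rewrite exprS coef0M coef_parts_poly0 mul0r.
rewrite exprS coefM -(big_mkord xpredT (fun j => P`_j * (P ^+ s)`_(m - j))).
case: m le_mn => [|m] le_mn.
  by rewrite big_nat1 coef_parts_poly0 mul0r mulr0 /split_sum big_geq ?mulr0.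
rewrite big_ltn // big_nat_recr //= coef_parts_poly0 subnn coef0_exp.
rewrite !mul0r mulr0 add0r addr0 mulr_sumr /split_sum mulr_sumr.
apply: ler_sum_nat => j /andP[j_gt0 lt_jm].
rewrite coef_parts_poly ?j_gt0 ?(leq_trans (ltnW lt_jm)) //.
rewrite mulrA powR_split ?j_gt0 // -mulrA mulrC ler_wpM2r ?powR_ge0 //.
by apply: bound_s; rewrite leq_subLR (leq_trans le_mn) ?leq_addl.
Qed.

Lemma coef_exp_bound s m : (m <= n)%N -> m%:R `^ p * (P ^+ s.+1)`_m <= Cp p ^+ s.
Proof.
elim: s m => [|s IH] m le_mn.
  case: m le_mn => [|m] le_mn; first by rewrite expr1 coef_parts_poly0 mulr0.
  by rewrite expr1 coef_parts_poly // -powRD ?subrr ?powRr0 // eqxx pnatr_eq0.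
apply: le_trans (coef_exp_step _ IH le_mn) _ => //.
by rewrite exprSr ler_wpM2l ?exprn_ge0 ?ltW ?Cp_gt0 ?split_sum_lt_Cp.
Qed.

End CompositionBound.

Theorem lemmaS10 (R : realType) (p : R) (s n : nat) :
  1 < p -> (2 <= s)%N -> (s <= n)%N ->
  compSum p s n < Cp p ^+ s.-1.
Proof.
move=> p_gt1 s_ge2 _; rewrite compSumE.
case: s s_ge2 => [|[|s]] // _.
apply: le_lt_trans (coef_exp_step _ (coef_exp_bound p_gt1 s) (leqnn n)) _ => //.
by rewrite [s.+2.-1]/= exprSr ltr_pM2l ?exprn_gt0 ?Cp_gt0 ?split_sum_lt_Cp.
Qed.
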